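(* Let $\mathcal{N}=\{1,\dots,N\}$ be a finite index set of blocks, let $\sigma>0$, and let $\mu_1,\dots,\mu_N\in\mathbb{R}$. For a fixed user $i$, let $p_{i,1},\dots,p_{i,N}>0$ be prior probabilities with $\sum_{n\in\mathcal{N}}p_{i,n}=1$. For $n\in\mathcal{N}$ let $\mathbb{P}(s\mid n)=\frac{1}{\sqrt{2\pi\sigma^2}}e^{-(s-\mu_n)^2/(2\sigma^2)}$ be the Gaussian density with mean $\mu_n$ and standard deviation $\sigma$. For $n'\in\mathcal{N}$ define the decision region $$\mathcal{R}_{i,n'}=\Big\{s\in\mathbb{R} : (s-\mu_{n'})^2-(s-\mu_n)^2\le 2\sigma^2\ln\frac{p_{i,n'}}{p_{i,n}}\ \text{ for all } n\in\mathcal{N}\setminus\{n'\}\Big\}.$$ Let $n,n'\in\mathcal{N}$ with $n\neq n'$ and $\mu_n\neq\mu_{n'}$, and set $$d_{i,n,n'}=\frac{(\mu_{n'}-\mu_n)^2-2\sigma^2\ln(p_{i,n'}/p_{i,n})}{2\sigma|\mu_{n'}-\mu_n|}.$$ Then $$\int_{\mathcal{R}_{i,n'}}\mathbb{P}(s\mid n)\,ds\le\begin{cases}\frac{1}{2}e^{-d_{i,n,n'}^2/2}, & d_{i,n,n'}\ge 0,\\[4pt] 1-\frac{1}{4}e^{-2d_{i,n,n'}^2/\pi}, & d_{i,n,n'}<0.\end{cases}$$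
   Context: This arises in received-signal-strength (RSS) based positioning: the space is divided into blocks $n$, the RSS measured by a user located in block $n$ is Gaussian with mean $\mu_n$ and standard deviation $\sigma$, $p_{i,n}$ is the prior probability that user $i$ is in block $n$, and $\mathcal{R}_{i,n'}$ is the set of RSS values for which the (prior-weighted maximum likelihood) estimate of user $i$'s location is block $n'$. The integral is thus the probability that a user in block $n$ is wrongly located in block $n'$. *)

From mathcomp Require Import all_boot all_order all_algebra.
From mathcomp Require Import all_classical all_reals all_analysis.
Set Implicit Arguments. Unset Strict Implicit. Unset Printing Implicit Defensive.
Import Order.TTheory GRing.Theory Num.Theory.
Local Open Scope classical_set_scope.
Local Open Scope ring_scope.

Definition gauss_pdf (R : realType) (sigma mu s : R) : R :=
  (Num.sqrt (2 * pi * sigma ^+ 2))^-1 * expR (- ((s - mu) ^+ 2) / (2 * sigma ^+ 2)).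

Definition decision_region (R : realType) (N : nat) (sigma : R)
    (mu p : 'I_N -> R) (n' : 'I_N) : set R :=
  [set s | forall n : 'I_N, n != n' ->
     (s - mu n') ^+ 2 - (s - mu n) ^+ 2 <= 2 * sigma ^+ 2 * ln (p n' / p n)].

Definition dist_d (R : realType) (N : nat) (sigma : R)
    (mu p : 'I_N -> R) (n n' : 'I_N) : R :=
  ((mu n' - mu n) ^+ 2 - 2 * sigma ^+ 2 * ln (p n' / p n))
  / (2 * sigma * `|mu n' - mu n|).

Definition error_bound (R : realType) (d : R) : R :=
  if 0 <= d then 2^-1 * expR (- (d ^+ 2) / 2)
  else 1 - 4^-1 * expR (- (2 * d ^+ 2) / pi).

(* Comparing the region's defining inequality for the competitor n with the
   one for n' shows that R_{i,n'} is contained in the half-line beyond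
   mu_n + d sigma (or below mu_n - d sigma when mu_n' < mu_n), so after
   standardisation the error probability is at most the standard normal tail
   Q(d).  For d >= 0, the comparison phi(v) <= e^{-d^2/2} phi(v - d) on
   [d, +oo) gives Q(d) <= e^{-d^2/2} Q(0) = e^{-d^2/2} / 2.  For d < 0,
   Q(d) = 1 - Q(-d), and Q(x) >= e^{-2x^2/pi} / 4 for x >= 0 follows from the
   pointwise bound (v/pi) e^{-2v^2/pi} <= phi(v), whose left-hand side
   integrates to e^{-2x^2/pi} / 4 on [x, +oo); that pointwise bound holds
   because pi <= 16/5. *)

From mathcomp Require Import all_boot all_order all_algebra.
From mathcomp Require Import all_classical all_reals all_analysis measurable_realfun.
From mathcomp Require Import zify ring lra.
Import Order.TTheory GRing.Theory Num.Theory numFieldNormedType.Exports.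
Local Open Scope classical_set_scope.
Local Open Scope ring_scope.

Section pi_upper_bound.
Variable R : realType.

Let cos_coeff'_pair_lt0 (x : R) k : x != 0 -> odd k ->
  x ^+ 2 < (k.*2.+1 * k.*2.+2)%:R -> cos_coeff' x k + cos_coeff' x k.+1 < 0.
Proof.
move=> x0 ok x2_lt.
rewrite /cos_coeff' -!exprnP -(signr_odd _ k) -(signr_odd _ k.+1) /= ok /=.
rewrite expr1 expr0 !mulN1r !mul1r doubleS !factS !natrM.
have xk_gt0 : 0 < x ^+ k.*2 by rewrite -muln2 mulnC exprM exprn_gt0 ?exprn_even_gt0.
have F_gt0 : 0 < (k.*2)`!%:R :> R by rewrite ltr0n fact_gt0.
have -> : x ^+ k.*2.+2 = x ^+ 2 * x ^+ k.*2 by rewrite -exprD addnC addn2.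
set X := x ^+ k.*2; set F := (k.*2)`!%:R : R.
set a := k.*2.+1%:R : R; set b := k.*2.+2%:R : R.
have ab_gt0 : 0 < a * b by rewrite mulr_gt0 ?ltr0n.
have -> : - X / F + x ^+ 2 * X / (b * (a * F)) = - (X / F * (1 - x ^+ 2 / (a * b))).
  by field; rewrite !gt_eqF // ltr0n.
rewrite oppr_lt0 mulr_gt0 ?divr_gt0 // subr_gt0 ltr_pdivrMr // mul1r.
by rewrite /a /b -natrM.
Qed.

Lemma cos_8_5_lt0 : cos (8 / 5 : R) < 0.
Proof.
rewrite -(opprK (cos _)) oppr_lt0; have /cvgN h := @cvg_cos_coeff' R (8 / 5).
rewrite -(cvg_lim _ h) //.
apply: (@lt_trans _ _ (\sum_(0 <= i < 3) - cos_coeff' (8 / 5) i)).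
  do 3 rewrite big_nat_recl //; rewrite big_nil addr0 /cos_coeff' /=.
  by rewrite !factS fact0 /= -!exprnP !exprS !expr0 /=; lra.
rewrite -seriesN lt_sum_lim_series //; first by move/cvgP in h; rewrite seriesN.
move=> d; rewrite -opprD oppr_gt0 addnS cos_coeff'_pair_lt0 //.
- by rewrite oddD odd_double.
- apply: (@lt_le_trans _ _ 56); first by rewrite expr2; lra.
  rewrite ler_nat -!addnn; apply: (@leq_mul 7 8); lia.
Qed.

Lemma pi_le_16_5 : pi <= 16 / 5 :> R.
Proof.
rewrite leNgt; apply/negP => pi_gt.
have : 0 < cos (8 / 5 : R).
  by apply: cos_gt0_pihalf; apply/andP; split; have := @pi_gt0 R; lra.
by have := cos_8_5_lt0; lra.
Qed.

End pi_upper_bound.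

Section tail_kernel.
Context {R : realType}.
Local Notation mu := (@lebesgue_measure R).

Lemma expR_ge_tangent (c y : R) : expR c * (1 + (y - c)) <= expR y.
Proof.
have -> : expR y = expR c * expR (y - c) by rewrite -expRD addrC subrK.
by rewrite ler_pM2l ?expR_gt0 // expR_ge1Dx.
Qed.

Lemma expR_half_ge : 6561 / 4096 <= expR (2^-1 : R).
Proof.
have -> : (2^-1 : R) = 4%:R * 8^-1 by lra.
have -> : (6561 / 4096 : R) = (9 / 8) ^+ 4 by rewrite !exprS expr0; lra.
rewrite expRM_natl lerXn2r ?nnegrE ?expR_ge0 // (le_trans _ (expR_ge1Dx _)) //; lra.
Qed.

Lemma tail_kernel_le_gauss_pdf (v : R) : 0 <= v ->
  v / pi * expR (- 2 / pi * v ^+ 2) <= gauss_pdf 1 0 v.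
Proof.
move=> v_ge0; rewrite /gauss_pdf expr1n mulr1 subr0.
(* abstracting [pi] keeps [field] from unfolding its definition *)
have := pi_le_16_5 R; have := pi_ge2 R; move: (pi : R) => p p_ge2 p_le.
have p_gt0 : 0 < p by lra.
set s := Num.sqrt (2 * p).
have s_gt0 : 0 < s by rewrite sqrtr_gt0; lra.
have s2 : s ^+ 2 = 2 * p by rewrite sqr_sqrtr //; lra.
set a := 2 / p - 2^-1.
have a_gt0 : 0 < a by rewrite /a subr_gt0 ltr_pdivlMr //; lra.
have -> : - v ^+ 2 / (2 * 1) = - 2 / p * v ^+ 2 + a * v ^+ 2.
  by rewrite /a; field; rewrite gt_eqF.
rewrite expRD [leRHS]mulrCA [leLHS]mulrC ler_pM2l ?expR_gt0 //.
rewrite ler_pdivrMr // -mulrA ler_pdivlMl //.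
(* Bound [expR (a v^2)] below by its tangent at [1/2] and [expR (1/2)] by [C];
   what remains is a quadratic in [v] whose discriminant [2p - C^2 p (4 - p)]
   is nonpositive because [p <= 16/5]. *)
set C : R := 6561 / 4096.
apply: (@le_trans _ _ (C * (2^-1 + a * v ^+ 2) * p)); last first.
  have av_ge0 : 0 <= a * v ^+ 2 by rewrite mulr_ge0 ?sqr_ge0 ?ltW.
  rewrite (ler_pM2r p_gt0) (le_trans _ (expR_ge_tangent 2^-1 _)) //.
  by apply: ler_pM; rewrite ?expR_half_ge //; rewrite /C; lra.
set A := C * (2 - p / 2); set B := C * (p / 2).
have A_gt0 : 0 < A by rewrite /A /C; lra.
have -> : C * (2^-1 + a * v ^+ 2) * p = A * v ^+ 2 + B.
  by rewrite /A /B /a; field; rewrite gt_eqF.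
suff : 0 <= 4 * A * (A * v ^+ 2 - s * v + B) by rewrite pmulr_rge0; lra.
have -> : 4 * A * (A * v ^+ 2 - s * v + B) = (2 * A * v - s) ^+ 2 + (4 * A * B - s ^+ 2).
  by ring.
rewrite s2 addr_ge0 ?sqr_ge0 //.
have -> : 4 * A * B - 2 * p = p * (C ^+ 2 * (4 - p) - 2) by rewrite /A /B; field.
by rewrite mulr_ge0 ?ltW // /C; lra.
Qed.

Lemma is_derive_expR_sqr (c v : R) :
  is_derive v 1 (fun w => expR (c * w ^+ 2)) (2 * c * v * expR (c * v ^+ 2)).
Proof.
have dsqr : is_derive v 1 (fun w : R => c * w ^+ 2) (2 * c * v).
  apply: DeriveDef => //.
  rewrite deriveM // derive_cst derive_val scaler0 addr0 [v%:A]mulr1.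
  by change (c * (v + v) = 2 * c * v); ring.
have := @is_derive1_comp _ expR (fun w => c * w ^+ 2) v _ _ (is_derive_expR _) dsqr.
by rewrite mulrC.
Qed.

Lemma cvgy_expR_sqr (c : R) : c < 0 -> expR (c * v ^+ 2) @[v --> +oo] --> 0.
Proof.
move=> c_lt0; set q := Num.sqrt (- c).
have q_gt0 : 0 < q by rewrite sqrtr_gt0 oppr_gt0.
have -> : (fun v => expR (c * v ^+ 2)) = gauss_fun \o (fun v => v * q).
  apply/funext => v; rewrite /gauss_fun /= exprMn sqr_sqrtr ?oppr_ge0 ?ltW //.
  by rewrite mulrN opprK mulrC.
apply: (cvg_comp (fun v => v * q) gauss_fun); last exact: cvg_gauss_fun.
by apply: gt0_cvgMly => //; exact: cvg_id.
Qed.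

Lemma is_derive_tail_kernel_primitive (v : R) :
  is_derive v 1 (fun w => - 4^-1 * expR (- 2 / pi * w ^+ 2))
    (v / pi * expR (- 2 / pi * v ^+ 2)).
Proof.
have [dE DE] := is_derive_expR_sqr (- 2 / pi) v.
apply: DeriveDef; first exact: derivableM.
rewrite deriveM // derive_cst DE scaler0 addr0.
change (- 4^-1 * (2 * (- 2 / pi) * v * expR (- 2 / pi * v ^+ 2)) =
        v / pi * expR (- 2 / pi * v ^+ 2)).
by move: (pi_gt0 R); move: (pi : R) => p p_gt0; field; rewrite gt_eqF.
Qed.

Lemma integral_tail_kernel (x : R) : 0 <= x ->
  (\int[mu]_(v in `[x, +oo[) (v / pi * expR (- 2 / pi * v ^+ 2))%:E =
   (4^-1 * expR (- 2 / pi * x ^+ 2))%:E)%E.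
Proof.
move=> x_ge0; have dF := is_derive_tail_kernel_primitive.
rewrite (@ge0_continuous_FTC2y R (fun v => v / pi * expR (- 2 / pi * v ^+ 2))
  (fun w => - 4^-1 * expR (- 2 / pi * w ^+ 2)) _ 0).
- by rewrite sub0e -EFinN -mulNr opprK.
- move=> v x_le_v.
  by rewrite mulr_ge0 ?expR_ge0 // divr_ge0 ?(le_trans x_ge0 x_le_v) ?pi_ge0.
- apply: continuous_subspaceT => v; apply: differentiable_continuous.
  exact/derivable1_diffP.
- rewrite -(mulr0 (- 4^-1)); apply: cvgM; first exact: cvg_cst.
  by apply: cvgy_expR_sqr; rewrite mulNr oppr_lt0 divr_gt0 ?pi_gt0.
- by move=> v _; have [] := dF v.
- apply: cvg_at_right_filter; have [/derivable1_diffP dFx _] := dF x.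
  exact: (differentiable_continuous dFx).
- by move=> v _; rewrite derive1E; have [_ ->] := dF v.
Qed.

End tail_kernel.

Section affine_substitution.
Context {R : realType}.
Local Notation mu := (@lebesgue_measure R).

Lemma integral_itvcy_affine (k b a : R) (G : R -> R) : 0 < k -> continuous G ->
  (forall x, 0 <= G x) ->
  (\int[mu]_(x in `[(a * k + b)%R, +oo[) (G x)%:E =
   \int[mu]_(x in `[a, +oo[) (G (x * k + b) * k)%:E)%E.
Proof.
move=> k_gt0 cG G_ge0.
have dF : (fun x : R => x * k + b)^`()%classic = cst k.
  apply/funext => x; rewrite derive1E deriveD // deriveM // !derive_cst derive_id.
  by rewrite scaler0 add0r addr0; exact: mulr1.
rewrite (@increasing_ge0_integration_by_substitutiony R (fun x => x * k + b)) ?dF //.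
- by move=> x y _ _ xy; rewrite ltrD2r ltr_pM2r.
- by move=> x _; exact: cst_continuous.
- exact: is_cvg_cst.
- exact: is_cvg_cst.
- split; first by move=> x _; apply: derivableD => //; apply: derivableM.
  apply: cvg_at_right_filter; apply: cvgD; last exact: cvg_cst.
  by apply: cvgM; [exact: cvg_id | exact: cvg_cst].
- apply: (cvg_comp (fun x => x * k) (fun r => r + b)); last exact: cvg_addrr.
  by apply: gt0_cvgMly => //; exact: cvg_id.
- exact: continuous_subspaceT.
Qed.

End affine_substitution.

Section gauss_pdf.
Context {R : realType}.
Local Notation mu := (@lebesgue_measure R).
Implicit Types (sigma m s v : R).

Lemma gauss_pdf_ge0 sigma m s : 0 <= gauss_pdf sigma m s.
Proof. by rewrite /gauss_pdf mulr_ge0 ?invr_ge0 ?sqrtr_ge0 ?expR_ge0. Qed.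

Lemma gauss_pdf_normal sigma m : sigma != 0 -> gauss_pdf sigma m = normal_pdf m sigma.
Proof.
move=> sigma_neq0; apply/funext => s.
rewrite /normal_pdf (negbTE sigma_neq0) /gauss_pdf /normal_peak /normal_fun.
by congr (_^-1 * expR _); [congr Num.sqrt|congr (_ / _)]; rewrite -mulr_natr; ring.
Qed.

Lemma continuous_gauss_pdf sigma m : sigma != 0 -> continuous (gauss_pdf sigma m).
Proof. by move=> sigma_neq0; rewrite gauss_pdf_normal //; exact: continuous_normal_pdf. Qed.

Lemma measurable_gauss_pdf sigma m (A : set R) :
  measurable_fun A (EFin \o gauss_pdf sigma m).
Proof.
apply/measurable_EFinP; apply: measurable_funTS; apply: measurable_funM => //.
apply: measurableT_comp => //; apply: measurable_funM => //.
apply: measurableT_comp => //; apply: measurable_funX; exact: measurable_funB.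
Qed.

Lemma integral_gauss_pdf sigma m : sigma != 0 ->
  (\int[mu]_s (gauss_pdf sigma m s)%:E = 1)%E.
Proof. by move=> sigma_neq0; rewrite gauss_pdf_normal // integral_normal_pdf. Qed.

Lemma gauss_pdf_affine sigma m v : 0 < sigma ->
  gauss_pdf sigma m (v * sigma + m) * sigma = gauss_pdf 1 0 v.
Proof.
move=> sigma_gt0.
rewrite /gauss_pdf addrK subr0 expr1n mulr1 mulrAC; congr (_ * _).
  rewrite sqrtrM ?mulr_ge0 ?pi_ge0 // sqrtr_sqr gtr0_norm // invfM -mulrA.
  by rewrite mulVf ?gt_eqF //; exact: mulr1.
by congr expR; field; rewrite gt_eqF.
Qed.

Lemma gauss_pdfN sigma m s : gauss_pdf sigma m (- s) = gauss_pdf sigma (- m) s.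
Proof. by rewrite /gauss_pdf -[(- s - m) ^+ 2]sqrrN opprD !opprK. Qed.

Lemma subset_integral_gauss_pdf sigma m (A B : set R) :
  measurable A -> measurable B -> A `<=` B ->
  (\int[mu]_(s in A) (gauss_pdf sigma m s)%:E <=
   \int[mu]_(s in B) (gauss_pdf sigma m s)%:E)%E.
Proof.
move=> mA mB; apply: (ge0_subset_integral mu mA mB (f := EFin \o gauss_pdf sigma m)).
  exact: measurable_gauss_pdf.
by move=> s _; rewrite /= lee_fin gauss_pdf_ge0.
Qed.

End gauss_pdf.

Section std_normal_tail.
Context {R : realType}.
Local Notation mu := (@lebesgue_measure R).
Implicit Types (sigma m x : R).

Definition std_normal_tail x : \bar R :=
  \int[mu]_(v in `[x, +oo[) (gauss_pdf 1 0 v)%:E.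

Lemma gauss_pdf_upper_tail sigma m x : 0 < sigma ->
  (\int[mu]_(s in `[(x * sigma + m)%R, +oo[) (gauss_pdf sigma m s)%:E = std_normal_tail x)%E.
Proof.
move=> sigma_gt0.
rewrite integral_itvcy_affine //; last exact: gauss_pdf_ge0.
  by apply: eq_integral => v _; rewrite gauss_pdf_affine.
by apply: continuous_gauss_pdf; rewrite gt_eqF.
Qed.

Lemma gauss_pdf_lower_tail sigma m x : 0 < sigma ->
  (\int[mu]_(s in `]-oo, (m - x * sigma)%R]) (gauss_pdf sigma m s)%:E = std_normal_tail x)%E.
Proof.
move=> sigma_gt0; have -> : m - x * sigma = - (x * sigma + - m) by rewrite opprD opprK addrC.
rewrite ge0_integration_by_substitutionNy; first last.
- by move=> s _; exact: gauss_pdf_ge0.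
- by apply: continuous_subspaceT; apply: continuous_gauss_pdf; rewrite gt_eqF.
under eq_integral do rewrite /= gauss_pdfN.
exact: gauss_pdf_upper_tail.
Qed.

Lemma std_normal_tailN x : (std_normal_tail x + std_normal_tail (- x) = 1)%E.
Proof.
have := gauss_pdf_lower_tail 1 0 (- x) ltr01; rewrite mulr1 sub0r opprK => <-.
rewrite -integral_itv_bndo_bndc; last exact: measurable_gauss_pdf.
rewrite -ge0_integral_setU //; first last.
- apply/disj_setPS => v [] /=; rewrite !in_itv /= andbT => x_le_v v_lt_x.
  by have := le_lt_trans x_le_v v_lt_x; rewrite ltxx.
- by move=> v _; rewrite lee_fin gauss_pdf_ge0.
- exact: measurable_gauss_pdf.
have -> : `[x, +oo[ `|` `]-oo, x[ = [set: R].
  apply/seteqP; split => v // _ /=; rewrite !in_itv /= andbT.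
  by case: (leP x v); [left|right].
by rewrite integral_gauss_pdf ?oner_neq0.
Qed.

Lemma std_normal_tail0 : std_normal_tail 0 = (2^-1)%:E.
Proof.
have := std_normal_tailN 0; rewrite oppr0.
by case: std_normal_tail => [r [] r_r|//|//]; congr EFin; lra.
Qed.

Lemma gauss_pdf_le_shift x v : 0 <= x <= v ->
  gauss_pdf 1 0 v <= expR (- (x ^+ 2) / 2) * gauss_pdf 1 x v.
Proof.
move=> /andP[x_ge0 x_le_v]; rewrite /gauss_pdf [leRHS]mulrCA ler_pM2l; last first.
  by rewrite invr_gt0 sqrtr_gt0 expr1n mulr1 mulr_gt0 ?pi_gt0.
rewrite -expRD ler_expR expr1n mulr1 subr0.
have : 0 <= x * (v - x) by rewrite mulr_ge0 ?subr_ge0.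
nra.
Qed.

Lemma std_normal_tail_le x : 0 <= x ->
  (std_normal_tail x <= (2^-1 * expR (- (x ^+ 2) / 2))%:E)%E.
Proof.
move=> x_ge0; set c := expR (- (x ^+ 2) / 2).
apply: (@le_trans _ _ (\int[mu]_(v in `[x, +oo[) (c * gauss_pdf 1 x v)%:E)%E).
  apply: ge0_le_integral => //.
  - by move=> v _; rewrite lee_fin gauss_pdf_ge0.
  - exact: measurable_gauss_pdf.
  - apply/measurable_EFinP; apply: measurable_funM => //.
    by apply/measurable_EFinP; exact: measurable_gauss_pdf.
  - move=> v; rewrite /= in_itv /= andbT => x_le_v; rewrite lee_fin.
    by apply: gauss_pdf_le_shift; rewrite x_ge0.
under eq_integral do rewrite EFinM.
rewrite ge0_integralZl_EFin ?expR_ge0 //; last 2 first.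
- by move=> v _; rewrite lee_fin gauss_pdf_ge0.
- exact: measurable_gauss_pdf.
have := gauss_pdf_upper_tail 1 x 0 ltr01; rewrite mul0r add0r => ->.
by rewrite std_normal_tail0 -EFinM mulrC.
Qed.

Lemma std_normal_tail_ge x : 0 <= x ->
  ((4^-1 * expR (- (2 * x ^+ 2) / pi))%:E <= std_normal_tail x)%E.
Proof.
move=> x_ge0; have -> : - (2 * x ^+ 2) / pi = - 2 / pi * x ^+ 2 by ring.
rewrite -integral_tail_kernel //.
have kernel_ge0 v : x <= v -> 0 <= v / pi * expR (- 2 / pi * v ^+ 2).
  by move=> x_le_v; rewrite mulr_ge0 ?expR_ge0 // divr_ge0 ?(le_trans x_ge0 x_le_v) ?pi_ge0.
apply: ge0_le_integral => //.
- by move=> v; rewrite /= in_itv /= andbT => /kernel_ge0; rewrite lee_fin.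
- apply/measurable_EFinP; apply: measurable_funTS; apply: continuous_measurable_fun.
  by move=> v; apply: differentiable_continuous; exact/derivable1_diffP.
- exact: measurable_gauss_pdf.
- move=> v; rewrite /= in_itv /= andbT => x_le_v; rewrite lee_fin.
  exact: tail_kernel_le_gauss_pdf (le_trans x_ge0 x_le_v).
Qed.

Lemma std_normal_tail_le_error_bound x : (std_normal_tail x <= (error_bound x)%:E)%E.
Proof.
rewrite /error_bound; case: ifPn => [x_ge0|]; first exact: std_normal_tail_le.
rewrite -ltNge => x_lt0.
have /std_normal_tail_ge : 0 <= - x by rewrite oppr_ge0 ltW.
rewrite sqrrN.
have := std_normal_tailN x.
case: (std_normal_tail x) => [r||]; case: (std_normal_tail (- x)) => [r'||] //=.
by move=> [] r_r'; rewrite !lee_fin; lra.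
Qed.

End std_normal_tail.

Section decision_region.
Context {R : realType} {N : nat} {sigma : R} {mu p : 'I_N -> R}.

Lemma closed_decision_region n' : closed (decision_region sigma mu p n').
Proof.
have -> : decision_region sigma mu p n' = \bigcap_(k in [set k | k != n'])
    [set s | (s - mu n') ^+ 2 - (s - mu k) ^+ 2 <= 2 * sigma ^+ 2 * ln (p n' / p k)].
  by [].
apply: closed_bigI => k _.
set g := fun s : R => (s - mu n') ^+ 2 - (s - mu k) ^+ 2.
have cont : continuous g.
  by move=> s; apply: differentiable_continuous; exact/derivable1_diffP.
have := @closed_le R (2 * sigma ^+ 2 * ln (p n' / p k)).
by move/(proj1 (continuous_closedP g) cont).
Qed.

Lemma decision_region_le n n' : 0 < sigma -> n != n' ->
  decision_region sigma mu p n' `<=`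
  [set s | dist_d sigma mu p n n' * sigma * `|mu n' - mu n| <= (mu n' - mu n) * (s - mu n)].
Proof.
move=> sigma_gt0 nn' s /(_ n nn') /=.
set D := mu n' - mu n; set c := 2 * sigma ^+ 2 * ln _.
have -> : (s - mu n') ^+ 2 - (s - mu n) ^+ 2 = D ^+ 2 - 2 * D * (s - mu n).
  by rewrite /D; ring.
have [->|D_neq0] := eqVneq D 0; first by rewrite normr0 !(mulr0, mul0r).
have -> : dist_d sigma mu p n n' * sigma * `|D| = (D ^+ 2 - c) / 2.
  by rewrite /dist_d -/D -/c; field; rewrite normr_eq0 D_neq0 gt_eqF.
lra.
Qed.

End decision_region.

Theorem proposition1 (R : realType) (N : nat) (sigma : R) (mu p : 'I_N -> R)
    (n n' : 'I_N) :
  0 < sigma ->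
  (forall k, 0 < p k) ->
  \sum_(k < N) p k = 1 ->
  n != n' ->
  mu n != mu n' ->
  (\int[@lebesgue_measure R]_(s in decision_region sigma mu p n')
      (gauss_pdf sigma (mu n) s)%:E
   <= (error_bound (dist_d sigma mu p n n'))%:E)%E.
Proof.
move=> sigma_gt0 _ _ nn' mu_neq.
set d := dist_d sigma mu p n n'.
apply: (le_trans _ (std_normal_tail_le_error_bound d)).
have region_le := decision_region_le (mu := mu) (p := p) n n' sigma_gt0 nn'.
have mR := closed_measurable (@closed_decision_region _ _ sigma mu p n').
have [mu_lt|mu_gt|mu_eq] := ltgtP (mu n) (mu n'); last by rewrite mu_eq eqxx in mu_neq.
- rewrite -(gauss_pdf_upper_tail sigma (mu n) d sigma_gt0).
  apply: subset_integral_gauss_pdf => // s /region_le /=.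
  rewrite gtr0_norm ?subr_gt0 // /= in_itv /= andbT -lerBrDr mulrC ler_pM2l ?subr_gt0 //.
- rewrite -(gauss_pdf_lower_tail sigma (mu n) d sigma_gt0).
  apply: subset_integral_gauss_pdf => // s /region_le /=.
  rewrite ltr0_norm ?subr_lt0 // /= in_itv /= mulrN -mulNr mulrC ler_nM2l ?subr_lt0 //.
  by rewrite -/d; lra.
Qed.
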